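(* Let $f$ be a probability density on $\mathbb{R}^p$ with $\int_{\mathbb{R}^p}\|x\|f(x)\,dx<\infty$, let $K(x)=(2\pi)^{-p/2}e^{-\|x\|^2/2}$, $K_\epsilon(x)=\epsilon^{-p}K(x/\epsilon)$ for fixed $\epsilon>0$, $f_\epsilon=f*K_\epsilon$ with $\nabla f_\epsilon(m)=\int_{\mathbb{R}^p}\nabla K_\epsilon(m-t)f(t)\,dt$, and $\lambda>0$. Define $$h_\infty(m)=\lim_{c\to\infty}\frac{\nabla f_\epsilon(cm)-\lambda cm}{c},\qquad m\in\mathbb{R}^p.$$ Then this limit exists for every $m$, and the ODE $\dot m(t)=h_\infty(m(t))$ has the origin as its unique globally asymptotically stable equilibrium point.
   Context: The convolution is $(u*v)(x)=\int_{\mathbb{R}^p}u(x-t)v(t)\,dt$. *)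

From HB Require Import structures.
From mathcomp Require Import all_boot all_order all_algebra.
From mathcomp Require Import all_classical all_reals all_analysis.
Set Implicit Arguments. Unset Strict Implicit. Unset Printing Implicit Defensive.
Import Order.TTheory GRing.Theory Num.Theory.
Import numFieldNormedType.Exports.
Local Open Scope classical_set_scope.
Local Open Scope ring_scope.

Section defs.
Context {R : realType} {p : nat}.

(* R^p is represented by row vectors 'rV[R]_p (normed space, topology,
   derivatives); Lebesgue measure lives on p.-tuple R, which carries the
   product (= Borel) sigma-algebra; [tup2rv] identifies the two. *)
Definition tup2rv (t : p.-tuple R) : 'rV[R]_p := \row_i tnth t i.

Definition enorm (x : 'rV[R]_p) : R := Num.sqrt (\sum_i x ord0 i ^+ 2).

Definition is_lebesgue_measure (mu : {measure set (p.-tuple R) -> \bar R}) :=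
  forall a b : p.-tuple R, (forall i, tnth a i <= tnth b i) ->
    mu [set x | forall i, tnth a i <= tnth x i < tnth b i] =
      (\prod_i (tnth b i - tnth a i))%:E.

Definition is_density (mu : {measure set (p.-tuple R) -> \bar R})
    (f : 'rV[R]_p -> R) :=
  [/\ measurable_fun setT (f \o tup2rv), (forall x, 0 <= f x) &
      (\int[mu]_t (f (tup2rv t))%:E = 1)%E].

Definition gaussK (x : 'rV[R]_p) : R :=
  (2 * pi) `^ (- (p%:R / 2)) * expR (- (enorm x ^+ 2) / 2).

Definition Keps (eps : R) (x : 'rV[R]_p) : R :=
  eps ^- p * gaussK (eps^-1 *: x).

Definition grad (g : 'rV[R]_p -> R) (x : 'rV[R]_p) : 'rV[R]_p :=
  \row_i ('D_(delta_mx ord0 i) g x : R).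

Definition gradf_eps (mu : {measure set (p.-tuple R) -> \bar R})
    (f : 'rV[R]_p -> R) (eps : R) (m : 'rV[R]_p) : 'rV[R]_p :=
  \row_i Rintegral mu setT
    (fun t => (grad (Keps eps) (m - tup2rv t)) ord0 i * f (tup2rv t)).

Definition is_solution (h : 'rV[R]_p -> 'rV[R]_p) (m : R -> 'rV[R]_p) :=
  {within `[0, +oo[, continuous m} /\
  forall t : R, 0 < t -> derivable m t 1 /\ derive1 m t = h (m t).

Definition origin_unique_GAS (h : 'rV[R]_p -> 'rV[R]_p) :=
  [/\ h 0 = 0,
      (forall x, h x = 0 -> x = 0),
      (forall e : R, 0 < e -> exists2 d : R, 0 < d &
         forall m, is_solution h m -> enorm (m 0) < d ->
           forall t, 0 <= t -> enorm (m t) < e) &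
      (forall m, is_solution h m -> m t @[t --> +oo] --> (0 : 'rV[R]_p))].

End defs.

From HB Require Import structures.
From mathcomp Require Import all_boot all_order all_algebra.
From mathcomp Require Import all_classical all_reals all_analysis.
From mathcomp Require Import ring lra measurable_realfun.
Import Order.TTheory GRing.Theory Num.Theory.
Import numFieldNormedType.Exports.
Local Open Scope classical_set_scope.
Local Open Scope ring_scope.

(* Since grad K_eps (x) = - eps^-2 x K_eps(x) and |y| exp(-a y^2) is bounded,
   grad K_eps is bounded, and so is grad f_eps = (grad K_eps) * f, by the same
   constant, because f is a probability density.  Hence
   grad f_eps (c m) / c -> 0 and h_inf m = - lam m, whose solutions
   m(t) = exp(- lam t) m(0) shrink to the origin. *)

Lemma is_derive_expR_quadratic {R : realType} (C k a S : R) :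
  is_derive (0 : R) 1 (fun h : R => C * expR (k * (h * h + a * h + S)))
    (C * (expR (k * S) * (k * a))).
Proof.
have dq : is_derive (0 : R) 1 (fun h : R => h * h + a * h + S) a.
  rewrite (_ : (fun h => _) = (id * id + a \*: id + cst S)%R) //.
  by apply: is_derive_eq; rewrite /= !scale0r !add0r addr0 [_%:A]mulr1.
have de : is_derive (0 : R) 1 (expR \o (k \*: (fun h : R => h * h + a * h + S)))
    (expR (k * S) * (k * a)).
  by apply: is_derive_eq; rewrite /= !mulr0 !add0r.
rewrite (_ : (fun h => _) =
  C \*: (expR \o (k \*: (fun h : R => h * h + a * h + S)))) //.
exact: is_derive_eq.
Qed.

Lemma normr_mul_expR_sqr_le {R : realType} (a y : R) : 0 < a ->
  `|y| * expR (- a * y ^+ 2) <= 1 + a^-1.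
Proof.
move=> a0; rewrite mulNr expRN ler_pdivrMr ?expR_gt0 //.
apply: le_trans (_ : (1 + a^-1) * (1 + a * y ^+ 2) <= _); last first.
  by rewrite ler_pM2l ?expR_ge1Dx // ltr_wpDr // invr_ge0 ltW.
have -> : (1 + a^-1) * (1 + a * y ^+ 2) = 1 + a * y ^+ 2 + a^-1 + y ^+ 2.
  by field; rewrite gt_eqF.
have ay0 : 0 <= a * `|y| ^+ 2 by rewrite mulr_ge0 ?sqr_ge0 ?ltW.
have ai0 : 0 <= a^-1 by rewrite invr_ge0 ltW.
rewrite -(real_normK (num_real y)).
have := sqr_ge0 (`|y| - 1); rewrite sqrrB1 mulr2n; nra.
Qed.

Lemma derive_along_line {R : realType} {V : normedModType R}
    (g : V -> R) (x v : V) :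
  'D_v g x = 'D_1 (fun h : R => g (h *: v + x)) 0.
Proof.
rewrite /derive /=.
set lhs := (fun h : R => _); set rhs := (fun h : R => _).
suff -> : lhs = rhs by [].
apply/funext => h; rewrite /lhs /rhs /=.
by rewrite addr0 scale0r add0r [h%:A]mulr1.
Qed.

Lemma derive_mx_coord {R : realType} {k n : nat} (M : R -> 'M[R]_(k, n))
    (s : R) i j :
  derivable M s 1 -> is_derive s 1 (fun r => M r i j) ('D_1 M s i j).
Proof.
move=> dM; have cvgM : (fun h : R => h^-1 *: (M (h *: 1 + s) - M s)) @ 0^'
    --> 'D_1 M s by exact: dM.
have cvgMij : (fun h : R => h^-1 *: (M (h *: 1 + s) i j - M s i j)) @ 0^'
    --> 'D_1 M s i j.
  rewrite (_ : (fun h => _) = (fun A : 'M[R]_(k, n) => A i j) \o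
      (fun h : R => h^-1 *: (M (h *: 1 + s) - M s))); last first.
    by apply/funext => h /=; rewrite !mxE.
  by apply: continuous_cvg => //; exact: coord_continuous.
by apply: DeriveDef; [exact: cvgP cvgMij | exact: cvg_lim].
Qed.

Lemma mx_norm_le_coord {R : realType} {k n : nat} (A : 'M[R]_(k, n)) (B : R) :
  0 <= B -> (forall i j, `|A i j| <= B) -> `|A| <= B.
Proof.
move=> B0 AB; change (mx_norm A <= B); rewrite mx_normrE.
by elim/big_ind: _ => // x y xB yB; rewrite ge_max xB yB.
Qed.

Lemma scaleV_bounded_cvg0 {R : realType} {V : normedModType R}
    (g : R -> V) (B : R) :
  (forall c, `|g c| <= B) -> (fun c => c^-1 *: g c) @ +oo --> (0 : V).
Proof.
move=> gB; apply: norm_cvg0.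
apply: (@squeeze_cvgr _ _ _ _ (fun _ => 0) (fun c => c^-1 * B)).
- near=> c; have c0 : 0 < c by near: c; exists 0.
  by rewrite normr_ge0 /= normrZ gtr0_norm ?invr_gt0 // ler_pM2l ?invr_gt0.
- exact: cvg_cst.
- rewrite -(mul0r B); apply: cvgM; last exact: cvg_cst.
  by apply/gtr0_cvgV0; [exists 0 | exact: cvg_id].
Unshelve. all: by end_near.
Qed.

Section integral_bound.
Context {d} {T : measurableType d} {R : realType}
  (mu : {measure set T -> \bar R}).
Local Open Scope ereal_scope.

(* No measurability is needed: the nonnegative integral is a supremum over
   simple functions below the integrand. *)
Lemma ge0_le_integral_nomeas (g1 g2 : T -> \bar R) :
  (forall x, 0 <= g1 x) -> (forall x, g1 x <= g2 x) ->
  \int[mu]_x g1 x <= \int[mu]_x g2 x.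
Proof.
move=> g10 g12; have g20 x : 0 <= g2 x := le_trans (g10 x) (g12 x).
rewrite !ge0_integralTE //; apply: ge_ereal_sup => _ [h hg1 <-].
by apply: ereal_sup_ubound; exists h => //= x; exact: le_trans (hg1 x) (g12 x).
Qed.

Lemma normr_Rintegral_le_density (F g : T -> R) (B : R) :
  (0 <= B)%R -> measurable_fun setT F -> (forall t, 0 <= F t)%R ->
  \int[mu]_t (F t)%:E = 1 -> (forall t, `|g t| <= B * F t)%R ->
  (`|Rintegral mu setT g| <= B)%R.
Proof.
move=> B0 mF F0 F1 gB.
have intBF : \int[mu]_t (B * F t)%:E = B%:E.
  under eq_integral do rewrite EFinM.
  rewrite ge0_integralZl_EFin ?F1 ?mule1 //; last exact/measurable_EFinP.
  by move=> t _; rewrite lee_fin.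
have BF0 t : 0 <= (B * F t)%:E by rewrite lee_fin mulr_ge0.
have intp : \int[mu]_t ((EFin \o g) ^\+ t) <= B%:E.
  rewrite -intBF; apply: ge0_le_integral_nomeas => t; first exact: funepos_ge0.
  rewrite funeposE /= ge_max BF0 andbT lee_fin.
  exact: le_trans (ler_norm _) (gB t).
have intn : \int[mu]_t ((EFin \o g) ^\- t) <= B%:E.
  rewrite -intBF; apply: ge0_le_integral_nomeas => t; first exact: funeneg_ge0.
  rewrite funenegE /= ge_max BF0 andbT lee_fin.
  by apply: le_trans (gB t); rewrite -normrN ler_norm.
have intp0 : 0 <= \int[mu]_t ((EFin \o g) ^\+ t).
  by apply: integral_ge0 => t _; exact: funepos_ge0.
have intn0 : 0 <= \int[mu]_t ((EFin \o g) ^\- t).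
  by apply: integral_ge0 => t _; exact: funeneg_ge0.
rewrite /Rintegral integralE; move: intp intn intp0 intn0.
case: (\int[mu]_t _) => [a| |] //; case: (\int[mu]_t _) => [b| |] //.
by rewrite !lee_fin /= => *; rewrite ler_norml; apply/andP; split; lra.
Qed.

End integral_bound.

Section gaussian_kernel.
Context {R : realType} {p : nat}.

Lemma enorm_ge0 (x : 'rV[R]_p) : 0 <= enorm x.
Proof. exact: sqrtr_ge0. Qed.

Lemma enorm_sqr (x : 'rV[R]_p) : enorm x ^+ 2 = \sum_i x ord0 i ^+ 2.
Proof. by rewrite sqr_sqrtr // sumr_ge0 // => i _; exact: sqr_ge0. Qed.

Lemma enormZ (c : R) (x : 'rV[R]_p) : enorm (c *: x) = `|c| * enorm x.
Proof.
rewrite /enorm; under eq_bigr do rewrite mxE exprMn.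
by rewrite -mulr_sumr sqrtrM ?sqr_ge0 // sqrtr_sqr.
Qed.

Lemma sum_sqr_line (x : 'rV[R]_p) i (h : R) :
  \sum_j (h *: delta_mx ord0 i + x) ord0 j ^+ 2 =
  h * h + 2 * x ord0 i * h + \sum_j x ord0 j ^+ 2.
Proof.
rewrite (bigD1 i) //= [in RHS](bigD1 i) //= addrA; congr (_ + _).
  by rewrite !mxE !eqxx /= mulr1; ring.
apply: eq_bigr => j /negbTE ji.
by rewrite !mxE eqxx ji /= mulr0 add0r.
Qed.

Definition Keps_const (eps : R) := eps ^- p * (2 * pi) `^ (- (p%:R / 2)).

Lemma Keps_const_gt0 eps : 0 < eps -> 0 < Keps_const eps.
Proof.
move=> eps0; rewrite mulr_gt0 ?invr_gt0 ?exprn_gt0 //.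
by rewrite powR_gt0 // mulr_gt0 // pi_gt0.
Qed.

Lemma KepsE eps (x : 'rV[R]_p) :
  Keps eps x = Keps_const eps * expR (- eps ^-2 / 2 * \sum_i x ord0 i ^+ 2).
Proof.
rewrite /Keps /gaussK enorm_sqr; under eq_bigr do rewrite mxE exprMn.
rewrite -mulr_sumr mulrA; congr (_ * expR _).
by rewrite exprVn !mulNr mulrAC.
Qed.

Lemma grad_KepsE eps (x : 'rV[R]_p) i : 0 < eps ->
  grad (Keps eps) x ord0 i = - eps ^-2 * x ord0 i * Keps eps x.
Proof.
move=> eps0; rewrite mxE derive_along_line.
under eq_fun do rewrite KepsE sum_sqr_line.
have [_ ->] := is_derive_expR_quadratic (Keps_const eps) (- eps ^-2 / 2)
  (2 * x ord0 i) (\sum_j x ord0 j ^+ 2).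
by rewrite KepsE; field; rewrite gt_eqF.
Qed.

Definition Keps_grad_bound (eps : R) :=
  eps ^-2 * Keps_const eps * (1 + (eps ^-2 / 2)^-1).

Lemma Keps_grad_bound_ge0 eps : 0 < eps -> 0 <= Keps_grad_bound eps.
Proof.
move=> eps0; have e20 : 0 <= eps ^-2 by rewrite invr_ge0 exprn_ge0 ?ltW.
have C0 : 0 <= Keps_const eps by exact/ltW/Keps_const_gt0.
by apply: mulr_ge0; [exact: mulr_ge0 | rewrite addr_ge0 ?invr_ge0 ?divr_ge0].
Qed.

Lemma normr_grad_Keps_le eps (x : 'rV[R]_p) i : 0 < eps ->
  `|grad (Keps eps) x ord0 i| <= Keps_grad_bound eps.
Proof.
move=> eps0; rewrite grad_KepsE // KepsE.
have e20 : 0 < eps ^-2 by rewrite invr_gt0 exprn_gt0.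
have a0 : 0 < eps ^-2 / 2 by rewrite divr_gt0.
set C := Keps_const eps; set E := expR _.
have C0 : 0 < eps ^-2 * C by rewrite mulr_gt0 ?Keps_const_gt0.
have -> : - eps ^-2 * x ord0 i * (C * E) = - (eps ^-2 * C) * (x ord0 i * E).
  by ring.
rewrite normrM normrN (gtr0_norm C0) normrM (ger0_norm (expR_ge0 _)).
rewrite /Keps_grad_bound ler_pM2l //.
apply: le_trans _ (normr_mul_expR_sqr_le _ (x ord0 i) a0).
rewrite ler_wpM2l // ler_expR !mulNr lerN2 ler_pM2l //.
by rewrite (bigD1 i) //= lerDl sumr_ge0 // => j _; exact: sqr_ge0.
Qed.

End gaussian_kernel.

Arguments Keps_grad_bound {R} p eps.

Section linear_flow.
Context {R : realType} {p : nat} {lam : R} {m : R -> 'rV[R]_p}.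
Hypothesis m_sol : is_solution (fun x => (- lam) *: x) m.

Lemma is_derive_expR_mul_solution (s : R) (j : 'I_p) : 0 < s ->
  is_derive s (1 : R) (fun r => expR (lam * r) * m r ord0 j) 0.
Proof.
move=> s0; have [dm m's] := m_sol.2 s s0.
have dmj := derive_mx_coord _ _ ord0 j dm.
rewrite -derive1E m's mxE in dmj.
rewrite (_ : (fun r => _) =
  (expR \o (lam \*: (@id R))) * (fun r => m r ord0 j)) //.
apply: is_derive_eq; rewrite [lam%:A]mulr1.
change (expR (lam * s) * (- lam * m s ord0 j) +
  m s ord0 j * (expR (lam * s) * lam) = 0); ring.
Qed.

Lemma solution_expR (t : R) : 0 <= t -> m t = expR (- lam * t) *: m 0.
Proof.
move=> t0; apply/rowP => j; rewrite [RHS]mxE.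
pose u r := expR (lam * r) * m r ord0 j.
have cexp : {within `[0, t], continuous (fun r => expR (lam * r))}.
  apply: continuous_subspaceT => r.
  by apply: continuous_comp; [exact: mulrl_continuous | exact: continuous_expR].
have cmj : {within `[0, t], continuous (fun r => m r ord0 j)}.
  have cm : {within `[0, t], continuous m}.
    apply: continuous_subspaceW m_sol.1 => r /=.
    by rewrite !in_itv /= => /andP[-> _].
  move=> r; apply: (continuous_comp (cm r)
    (g := fun M : 'rV[R]_p => M ord0 j)).
  exact: coord_continuous.
have cu : {within `[0, t], continuous u}.
  by move=> r; exact: continuousM (cexp r) (cmj r).
have du r : r \in `]0, t[ -> is_derive r 1 u 0.
  by rewrite in_itv /= => /andP[r0 _]; exact: is_derive_expR_mul_solution.
have [c _] := MVT_segment t0 du cu.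
rewrite mul0r => /eqP; rewrite subr_eq0 => /eqP.
rewrite /u mulr0 expR0 mul1r => <-.
by rewrite mulNr expRN mulKf // gt_eqF ?expR_gt0.
Qed.

End linear_flow.

Lemma linear_origin_unique_GAS {R : realType} {p : nat} (lam : R) : 0 < lam ->
  origin_unique_GAS (fun x : 'rV[R]_p => (- lam) *: x).
Proof.
move=> lam0; split.
- by rewrite scaler0.
- by move=> x /eqP; rewrite scaler_eq0 oppr_eq0 gt_eqF //= => /eqP.
- move=> e e0; exists e => // m msol m0 t t0.
  rewrite (solution_expR msol) // enormZ gtr0_norm ?expR_gt0 //.
  apply: le_lt_trans m0; rewrite ler_piMl ?enorm_ge0 // expR_le1.
  by rewrite mulNr oppr_le0 mulr_ge0 // ltW.
- move=> m msol; rewrite -(scale0r (m 0)).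
  apply: (cvg_trans (G := (fun t => expR (- lam * t) *: m 0) @ +oo)).
    by apply: near_eq_cvg; near=> t; rewrite (solution_expR msol t).
  apply: cvgZ; last exact: cvg_cst.
  rewrite (_ : (fun t => _) = (fun z => expR (- z)) \o ( *%R lam)); last first.
    by apply/funext => t; rewrite /= mulNr.
  apply: (@cvg_comp _ _ _ _ _ _ (pinfty_nbhs R)); last exact: cvgr_expR.
  by apply: gt0_cvgMry => //; exact: cvg_id.
Unshelve. all: by end_near.
Qed.

Lemma normr_gradf_eps_le {R : realType} {p : nat}
    (mu : {measure set (p.-tuple R) -> \bar R}) (f : 'rV[R]_p -> R)
    (eps : R) (m : 'rV[R]_p) i :
  is_density mu f -> 0 < eps ->
  `|gradf_eps mu f eps m ord0 i| <= Keps_grad_bound p eps.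
Proof.
move=> [mf f0 f1] eps0; rewrite mxE.
apply: (normr_Rintegral_le_density mu (f \o tup2rv)) => //.
- exact: Keps_grad_bound_ge0.
- by move=> t; exact: f0.
- move=> t; rewrite normrM (ger0_norm (f0 _)) ler_wpM2r //.
  exact: normr_grad_Keps_le.
Qed.

Theorem proposition3 (R : realType) (p : nat)
  (mu : {measure set (p.-tuple R) -> \bar R}) (f : 'rV[R]_p -> R)
  (eps lam : R) :
  is_lebesgue_measure mu ->
  is_density mu f ->
  (\int[mu]_t (enorm (tup2rv t) * f (tup2rv t))%:E < +oo)%E ->
  0 < eps -> 0 < lam ->
  exists hinf : 'rV[R]_p -> 'rV[R]_p,
    (forall m : 'rV[R]_p,
       (fun c : R => c^-1 *: (gradf_eps mu f eps (c *: m) - (lam * c) *: m))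
         @ +oo --> hinf m) /\
    origin_unique_GAS hinf.
Proof.
move=> _ f_dens _ eps0 lam0.
exists (fun x => (- lam) *: x); split; last exact: linear_origin_unique_GAS.
move=> m; pose g c := gradf_eps mu f eps (c *: m).
have g_bounded c : `|g c| <= Keps_grad_bound p eps.
  apply: mx_norm_le_coord => [|i j]; first exact: Keps_grad_bound_ge0.
  by rewrite (ord1 i); exact: normr_gradf_eps_le.
have hE : {near +oo, (fun c => c^-1 *: g c + (- lam) *: m) =1
    (fun c => c^-1 *: (g c - (lam * c) *: m))}.
  near=> c; have c0 : c != 0 by rewrite gt_eqF.
  by rewrite scalerBr scalerA mulrCA mulVf // mulr1 scaleNr.
apply: cvg_trans (near_eq_cvg hE) _.
have : (fun c => c^-1 *: g c + (- lam) *: m) @ +oo --> 0 + (- lam) *: m.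
  exact: cvgD (scaleV_bounded_cvg0 _ _ g_bounded) (cvg_cst _).
by rewrite add0r.
Unshelve. all: by end_near.
Qed.
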